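(* Let $E$ be an infinite-dimensional real Banach space with density character $\kappa$. Then there exist $\delta>0$ and a linearly independent set $S\subseteq S_E$ (the unit sphere of $E$) with $|S|=\kappa$ such that $\|x-\lambda x'\|\ge\delta$ for all distinct $x,x'\in S$ and all $\lambda\in\mathbb R$.
   Context: The density character of a topological space is the least cardinality of a dense subset. *)

From HB Require Import structures.
From mathcomp Require Import all_boot all_order all_algebra.
From mathcomp Require Import all_classical all_reals all_analysis.
Set Implicit Arguments. Unset Strict Implicit. Unset Printing Implicit Defensive.
Import Order.TTheory GRing.Theory Num.Theory.
Import numFieldNormedType.Exports.
Local Open Scope classical_set_scope.
Local Open Scope ring_scope.

Definition lin_indep {R : realType} {E : normedModType R} (S : set E) : Prop :=
  forall (s : seq E), uniq s -> (forall x, x \in s -> S x) ->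
  forall c : E -> R, \sum_(x <- s) c x *: x = 0 ->
  forall x, x \in s -> c x = 0.

Definition finite_dim {R : realType} (E : normedModType R) : Prop :=
  exists s : seq E, forall x : E,
    exists c : E -> R, x = \sum_(y <- s) c y *: y.

Definition infinite_dim {R : realType} (E : normedModType R) : Prop :=
  ~ finite_dim E.

Definition unit_sphere {R : realType} {E : normedModType R} : set E :=
  [set x | `|x| = 1].

Definition density_character_set (T : topologicalType) (D : set T) : Prop :=
  dense D /\ forall D' : set T, dense D' -> (D #<= D')%card.

(* Take, by Zorn's lemma, a maximal family S of unit vectors that is linearly
   independent and such that |x - l x'| >= 1/3 for distinct x, x' in S and all
   scalars l. If span S were not dense, Riesz's lemma would give a unit vector x
   at distance >= 1/2 from span S, and S + x would still be admissible, because
   |x' - l x| >= max (1 - |l|) (|l| / 2) >= 1/3 for x' in S. Finite-dimensional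
   spans are closed, so S is infinite. Every point of S has a point of D within
   1/6 and points of S are 1/3 apart, whence |S| <= |D|; conversely the rational
   span of S is dense and, by Hessenberg's theorem |S * S| = |S|, it has at most
   |S| elements, whence |D| <= |S|. *)

From HB Require Import structures.
From mathcomp Require Import all_boot all_order all_algebra.
From mathcomp Require Import all_classical all_reals all_analysis.
From mathcomp Require Import lra.

Set Implicit Arguments. Unset Strict Implicit. Unset Printing Implicit Defensive.
Import Order.TTheory GRing.Theory Num.Theory.
Import numFieldNormedType.Exports.
Local Open Scope classical_set_scope.
Local Open Scope ring_scope.
Local Open Scope card_scope.

(** * Cardinals *)

Lemma card_lePex {T} {U : pointedType} (A : set T) (B : set U) :
  A #<= B <-> exists2 f : T -> U, (forall x, A x -> B (f x)) &
    (forall x y, A x -> A y -> f x = f y -> x = y).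
Proof.
split=> [/pcard_leP/injfunPex[f fAB f_inj]|[f fAB f_inj]].
  by exists f => // x y Ax Ay; apply: f_inj; rewrite inE.
by apply/pcard_leP/injfunPex; exists f => // x y; rewrite !inE; apply: f_inj.
Qed.

Lemma in_consP {T : eqType} (P : T -> Prop) x s :
  {in x :: s, forall y, P y} <-> P x /\ {in s, forall y, P y}.
Proof.
split=> [xsP|[Px sP] y /predU1P[->//|/sP//]].
by split=> [|y ys]; apply: xsP; rewrite in_cons ?eqxx ?ys ?orbT.
Qed.

Lemma set_choice {T U} (u0 : U) (A : set T) (P : T -> U -> Prop) :
  (forall x, A x -> exists y, P x y) ->
  exists f : T -> U, forall x, A x -> P x (f x).
Proof.
move=> AP; have /choice[f fP] : forall x, exists y, A x -> P x y.
  move=> x; have [/AP[y Pxy]|nAx] := pselect (A x); first by exists y.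
  by exists u0.
by exists f.
Qed.

Lemma card_le_setX {T T' : Type} {U U' : pointedType}
    (A : set T) (A' : set T') (B : set U) (B' : set U') :
  A #<= B -> A' #<= B' -> A `*` A' #<= B `*` B'.
Proof.
move=> /card_lePex[f fAB f_inj] /card_lePex[f' fAB' f_inj'].
apply/card_lePex; exists (fun p => (f p.1, f' p.2)).
  by move=> p [/fAB ? /fAB' ?].
by move=> [x x'] [y y'] [/= Ax Ax'] [/= Ay Ay'] [/f_inj-> // /f_inj'->].
Qed.

Lemma chain_bigcup2 {T} (F : set (set T)) x y : total_on F subset ->
  (\bigcup_(X in F) X) x -> (\bigcup_(X in F) X) y -> exists2 X, F X & X x /\ X y.
Proof.
move=> Ftot [X FX Xx] [Y FY Yy].
have [XY|YX] := Ftot _ _ FX FY; first by exists Y => //; split=> //; apply: XY.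
by exists X => //; split=> //; apply: YX.
Qed.

Lemma chain_bigcup_seq {T : eqType} (F : set (set T)) (s : seq T) :
  total_on F subset -> F !=set0 -> {in s, forall x, (\bigcup_(X in F) X) x} ->
  exists2 X, F X & {in s, forall x, X x}.
Proof.
move=> Ftot [X0 FX0]; elim: s => [|x s IH]; first by exists X0.
move=> /in_consP[[Y FY Yx] /IH[X FX Xs]].
have [XY|YX] := Ftot _ _ FX FY.
  by exists Y => //; apply/in_consP; split=> // y /Xs; apply: XY.
by exists X => //; apply/in_consP; split=> //; apply: YX.
Qed.

Lemma Zorn_bigcup_from {T} (P : set (set T)) (X0 : set T) : P X0 ->
  (forall F, F `<=` P -> F !=set0 -> total_on F subset ->
    P (\bigcup_(X in F) X)) ->
  exists2 A, X0 `<=` A & P A /\ forall B, A `<` B -> ~ P B.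
Proof.
move=> PX0 Pchain.
have [A [PA Amax]] : exists A, P (X0 `|` A) /\ forall B, A `<` B -> ~ P (X0 `|` B).
  apply: Zorn_bigcup => F FP Ftot.
  have [->|/set0P[X FX]] := eqVneq F set0.
    by rewrite bigcup_set0 setU0.
  have -> : X0 `|` \bigcup_(X in F) X = \bigcup_(Y in [set X0 `|` X | X in F]) Y.
    apply/seteqP; split=> [t [X0t|[Y FY Yt]]|t [_ [Y FY <-] [X0t|Yt]]].
    - by exists (X0 `|` X); [exists X|left].
    - by exists (X0 `|` Y); [exists Y|right].
    - by left.
    - by right; exists Y.
  apply: Pchain; first by move=> _ [X' FX' <-]; apply: FP.
    by exists (X0 `|` X), X.
  move=> _ _ [X1 F1 <-] [X2 F2 <-].
  by have [X12|X21] := Ftot _ _ F1 F2; [left|right]; apply: setUS.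
exists (X0 `|` A); [exact: subsetUl | split=> // B [AB nBA] PB].
have X0B : X0 `<=` B := subset_trans (@subsetUl _ X0 A) AB.
apply: (Amax B); last by rewrite setUidr.
split; first exact: subset_trans (@subsetUr _ X0 A) AB.
by move=> BA; apply: nBA; apply: subset_trans BA (@subsetUr _ _ _).
Qed.

Lemma card_le_total {T U} (A : set T) (B : set U) : A #<= B \/ B #<= A.
Proof.
elim/Ppointed: T A => T A; first by left; apply: card_le_emptyl.
elim/Ppointed: U B => U B; first by right; apply: card_le_emptyl.
pose partial_inj (H : set (T * U)) := [/\ H `<=` A `*` B,
  forall p q, H p -> H q -> p.1 = q.1 -> p.2 = q.2 &
  forall p q, H p -> H q -> p.2 = q.2 -> p.1 = q.1].
have [H _ [[HAB Hfun Hinj] Hmax]] : exists2 H, set0 `<=` H &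
    partial_inj H /\ forall H', H `<` H' -> ~ partial_inj H'.
  apply: Zorn_bigcup_from => [|F FP _ Ftot]; first by split.
  split.
  - by move=> p [H FH Hp]; have [+ _ _] := FP H FH; apply.
  - move=> p q Fp Fq; have [H FH [Hp Hq]] := chain_bigcup2 Ftot Fp Fq.
    by have [_ + _] := FP H FH; apply.
  - move=> p q Fp Fq; have [H FH [Hp Hq]] := chain_bigcup2 Ftot Fp Fq.
    by have [_ _ +] := FP H FH; apply.
have [dom|/existsNP[x /not_implyP[Ax nHx]]] :=
    pselect (forall x, A x -> exists y, H (x, y)).
  left; have [f Hf] := set_choice point dom.
  apply/card_lePex; exists f; first by move=> x /Hf/HAB[].
  by move=> a b /Hf Ha /Hf Hb /(Hinj _ _ Ha Hb).
have [ran|/existsNP[y /not_implyP[By nHy]]] :=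
    pselect (forall y, B y -> exists x, H (x, y)).
  right; have [f Hf] := set_choice point ran.
  apply/card_lePex; exists f; first by move=> y /Hf/HAB[].
  by move=> a b /Hf Ha /Hf Hb /(Hfun _ _ Ha Hb).
have Hx p : H p -> p.1 <> x.
  by case: p => a b Hab /= ax; apply: nHx; exists b; rewrite -ax.
have Hy p : H p -> p.2 <> y.
  by case: p => a b Hab /= b_y; apply: nHy; exists a; rewrite -b_y.
exfalso; apply: (Hmax (H `|` [set (x, y)])).
  split; first exact: subsetUl.
  by move=> /(_ (x, y) (or_intror erefl)) Hxy; apply: nHx; exists y.
split.
- by move=> p [/HAB//|->].
- move=> p q [Hp|->] [Hq|->] //= e; first exact: Hfun e.
    by have := Hx _ Hp e.
  by have := Hx _ Hq (esym e).
- move=> p q [Hp|->] [Hq|->] //= e; first exact: Hinj e.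
    by have := Hy _ Hp e.
  by have := Hy _ Hq (esym e).
Qed.

(* Hessenberg's theorem, by Zorn's lemma on graphs of injections B * B -> B
   with B a subset of A. If the support B of a maximal graph had a copy g(B)
   inside A `\` B, the pairs of (B + g(B)) * (B + g(B)) outside B * B would
   inject into g(B) through new_code and extend the graph. Hence A `\` B #<= B,
   and then A #<= B * B #<= B. *)
Section Hessenberg.
Variables (T : pointedType) (A : set T) (io : nat -> T).
Hypotheses (ioA : forall n, A (io n)) (io_inj : injective io).

Definition graph_support (G : set (T * T * T)) : set T :=
  [set t | exists2 q, G q & [\/ t = q.1.1, t = q.1.2 | t = q.2]].

Definition pairing_graph (G : set (T * T * T)) := [/\
  graph_support G `<=` A,
  forall t t', graph_support G t -> graph_support G t' -> exists u, G ((t, t'), u),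
  forall p u v, G (p, u) -> G (p, v) -> u = v &
  forall p q u, G (p, u) -> G (q, u) -> p = q].

(* Zorn's lemma is started from this graph so that the support of the maximal
   graph contains the tags io n used below. *)
Definition nat_pairing : set (T * T * T) :=
  range (fun mn : nat * nat => ((io mn.1, io mn.2), io (pickle mn))).

Lemma graph_support_mono G G' : G `<=` G' -> graph_support G `<=` graph_support G'.
Proof. by move=> GG' t [q Gq tq]; exists q => //; apply: GG'. Qed.

Lemma pairing_nat : pairing_graph nat_pairing.
Proof.
have support_io t : graph_support nat_pairing t -> exists2 m, A t & t = io m.
  by move=> [_ [[m n] _ <-] /= [] ->]; eexists; rewrite ?ioA.
split.
- by move=> t /support_io[].
- move=> _ _ /support_io[m _ ->] /support_io[n _ ->].
  by exists (io (pickle (m, n))); exists (m, n).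
- by move=> p u v [[m n] _ [<- <-]] [[m' n'] _ [/io_inj-> /io_inj-> ->]].
- move=> p q u [[m n] _ [<- <-]] [[m' n'] _ [<-]].
  by move=> /io_inj/(pcan_inj (@pickleK _))[-> ->].
Qed.

Lemma pairing_bigcup F : F `<=` pairing_graph -> F !=set0 -> total_on F subset ->
  pairing_graph (\bigcup_(X in F) X).
Proof.
move=> FP _ Ftot.
have support_bigcup t : graph_support (\bigcup_(X in F) X) t ->
    exists2 X, F X & graph_support X t.
  by move=> [q [X FX Xq] tq]; exists X => //; exists q.
split.
- by move=> t /support_bigcup[X /FP[+ _ _ _] Xt]; apply.
- move=> t t' /support_bigcup[X FX Xt] /support_bigcup[X' FX' Xt'].
  have [XX'|X'X] := Ftot _ _ FX FX'.
    have [_ /(_ t t') [|//|u Gu]] := FP _ FX'; first exact: graph_support_mono Xt.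
    by exists u, X'.
  have [_ /(_ t t') [//||u Gu]] := FP _ FX; first exact: graph_support_mono Xt'.
  by exists u, X.
- move=> p u v Fu Fv; have [X /FP[_ _ Xfun _] [Xu Xv]] := chain_bigcup2 Ftot Fu Fv.
  exact: Xfun Xu Xv.
- move=> p q u Fp Fq; have [X /FP[_ _ _ Xinj] [Xp Xq]] := chain_bigcup2 Ftot Fp Fq.
  exact: Xinj Xp Xq.
Qed.

Section MaximalPairing.
Variables (G : set (T * T * T)) (f : T * T -> T).
Hypotheses (PG : pairing_graph G) (natG : nat_pairing `<=` G).
Let B := graph_support G.
Hypothesis fG : forall p, (B `*` B) p -> G (p, f p).

Lemma support_io n : B (io n).
Proof.
exists ((io n, io n), io (pickle (n, n))); last exact: Or31.
by apply: natG; exists (n, n).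
Qed.

Lemma support_pairing p : (B `*` B) p -> B (f p).
Proof. by move=> /fG Gp; exists (p, f p) => //; exact: Or33. Qed.

Lemma pairing_inj p q : (B `*` B) p -> (B `*` B) q -> f p = f q -> p = q.
Proof.
by case: PG => _ _ _ Ginj /fG Gp /fG Gq fpq; apply: Ginj Gp _; rewrite fpq.
Qed.

Lemma card_supportX_le : B `*` B #<= B.
Proof.
by apply/card_lePex; exists f; [exact: support_pairing | exact: pairing_inj].
Qed.

Section Extension.
Variable g : T -> T.
Hypotheses (gB : forall b, B b -> (A `\` B) (g b))
  (g_inj : forall b c, B b -> B c -> g b = g c -> b = c).

Definition copy_if (x : bool) b := if x then g b else b.

Definition new_code (x y : bool) b c := g (f (io (pickle (x, y)), f (b, c))).

Definition new_pairs : set (T * T * T) := [set q | exists x y b c,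
  [/\ x || y, B b, B c & q = ((copy_if x b, copy_if y c), new_code x y b c)]].

Definition extension := G `|` new_pairs.

Lemma copy_if_inj x y b c : B b -> B c ->
  copy_if x b = copy_if y c -> x = y /\ b = c.
Proof.
move=> Bb Bc; case: x; case: y => //=.
- by move/(g_inj Bb Bc).
- by move=> e; have [_] := gB Bb; rewrite e.
- by move=> e; have [_] := gB Bc; rewrite -e.
Qed.

Lemma support_new_code_arg (x y : bool) b c : B b -> B c ->
  (B `*` B) (io (pickle (x, y)), f (b, c)).
Proof. by move=> Bb Bc; split; [apply: support_io | apply: support_pairing]. Qed.

Lemma new_code_fresh x y b c : B b -> B c -> (A `\` B) (new_code x y b c).
Proof. by move=> Bb Bc; apply/gB/support_pairing/support_new_code_arg. Qed.

Lemma new_code_inj x y b c x' y' b' c' : B b -> B c -> B b' -> B c' ->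
  new_code x y b c = new_code x' y' b' c' -> [/\ x = x', y = y', b = b' & c = c'].
Proof.
move=> Bb Bc Bb' Bc'.
have Bxy := support_new_code_arg x y Bb Bc.
have Bxy' := support_new_code_arg x' y' Bb' Bc'.
move=> /(g_inj (support_pairing Bxy) (support_pairing Bxy')).
move=> /(pairing_inj Bxy Bxy')[].
move=> /io_inj/(pcan_inj (@pickleK _))[-> ->].
have Bbc : (B `*` B) (b, c) by [].
have Bbc' : (B `*` B) (b', c') by [].
by move=> /(pairing_inj Bbc Bbc')[-> ->].
Qed.

Lemma new_key_fresh x y b c : x || y -> B b -> B c ->
  ~ (B (copy_if x b) /\ B (copy_if y c)).
Proof.
move=> xy Bb Bc []; have [_ ngb] := gB Bb; have [_ ngc] := gB Bc.
by case: x xy => /= [_ /ngb|]; case: y => //= _ _ /ngc.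
Qed.

Lemma support_extension t :
  graph_support extension t -> exists x b, B b /\ t = copy_if x b.
Proof.
move=> [q [Gq|[x [y [b [c [_ Bb Bc ->]]]]]] tq].
  by exists false, t; split=> //; exists q.
case: tq => /= ->; [by exists x, b | by exists y, c |].
exists true, (f (io (pickle (x, y)), f (b, c))); split=> //.
exact/support_pairing/support_new_code_arg.
Qed.

Lemma pairing_extension : pairing_graph extension.
Proof.
have [GA Gtot Gfun Ginj] := PG.
have Gsupport q : G q -> [/\ B q.1.1, B q.1.2 & B q.2].
  by move=> Gq; split; exists q => //; [exact: Or31|exact: Or32|exact: Or33].
split.
- move=> t /support_extension[x [b [Bb ->]]]; case: x => /=; last exact: GA.
  by have [] := gB Bb.
- move=> _ _ /support_extension[x [b [Bb ->]]] /support_extension[y [c [Bc ->]]].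
  have [xy|] := boolP (x || y).
    by exists (new_code x y b c); right; exists x, y, b, c.
  rewrite negb_or => /andP[/negbTE-> /negbTE->] /=.
  by have [u Gu] := Gtot b c Bb Bc; exists u; left.
- move=> p u v [Gu|[x [y [b [c [xy Bb Bc [-> ->]]]]]]].
    move=> [Gv|[x [y [b [c [xy Bb Bc [e _]]]]]]]; first exact: Gfun Gu Gv.
    have [Bp1 Bp2 _] := Gsupport _ Gu; rewrite e in Bp1 Bp2.
    by case: (new_key_fresh xy Bb Bc).
  move=> [Gv|[x' [y' [b' [c' [_ Bb' Bc']]]]]].
    have [Bp1 Bp2 _] := Gsupport _ Gv.
    by case: (new_key_fresh xy Bb Bc).
  by move=> [/(copy_if_inj Bb Bb')[<- <-] /(copy_if_inj Bc Bc')[<- <-] ->].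
- move=> p q u [Gu|[x [y [b [c [xy Bb Bc [-> ->]]]]]]].
    move=> [Gv|[x [y [b [c [xy Bb Bc [_ e]]]]]]]; first exact: Ginj Gu Gv.
    have [_ _ Bu] := Gsupport _ Gu; rewrite e in Bu.
    by have [] := new_code_fresh x y Bb Bc.
  move=> [Gv|[x' [y' [b' [c' [_ Bb' Bc' [-> e]]]]]]].
    have [_ _ Bu] := Gsupport _ Gv.
    by have [] := new_code_fresh x y Bb Bc.
  by have [-> -> -> ->] := new_code_inj Bb Bc Bb' Bc' e.
Qed.

Lemma proper_extension : G `<` extension.
Proof.
split=> [q|]; first by left.
pose b := io 0; have Bb : B b := support_io 0.
move=> sub; have [_] := new_code_fresh true true Bb Bb; apply.
exists ((copy_if true b, copy_if true b), new_code true true b b); last exact: Or33.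
by apply: sub; right; exists true, true, b, b.
Qed.

End Extension.

Hypothesis Gmax : forall G', G `<` G' -> ~ pairing_graph G'.

Lemma card_diff_support_le : A `\` B #<= B.
Proof.
have [//|/card_lePex[g gB g_inj]] := card_le_total (A `\` B) B.
by exfalso; apply: Gmax _ (proper_extension gB) (pairing_extension gB g_inj).
Qed.

Lemma card_le_supportX : A #<= B `*` B.
Proof.
have /card_lePex[h hB h_inj] := card_diff_support_le.
apply/card_lePex; exists (fun t => if `[< B t >] then (io 0, t) else (io 1, h t)).
  move=> t At; case: asboolP => Bt; split=> //; try exact: support_io.
  exact: hB.
move=> s t As At; case: asboolP => Bs; case: asboolP => Bt; case=> //.
- by move=> /io_inj.
- by move=> /io_inj.
- by move=> /h_inj; apply.
Qed.

End MaximalPairing.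
End Hessenberg.

Theorem card_setX_le {T} (A : set T) : infinite_set A -> A `*` A #<= A.
Proof.
elim/Ppointed: T A => T A Ainf.
  by exfalso; apply: Ainf; rewrite (empty_eq0 A); exact: finite_set0.
have /card_lePex[io ioA' io_inj'] := (infiniteP A).1 Ainf.
have ioA n : A (io n) := ioA' n I.
have io_inj : injective io := fun m n => io_inj' m n I I.
have [G natG [PG Gmax]] :=
  Zorn_bigcup_from (pairing_nat ioA io_inj) (@pairing_bigcup _ A).
have [GA Gtot _ _] := PG.
pose B := graph_support G.
have [f fG] : exists f : T * T -> T, forall p, (B `*` B) p -> G (p, f p).
  apply: (@set_choice _ _ point _ (fun p u => G (p, u))) => -[t t'] [/= Bt Bt'].
  exact: Gtot.
have AB := card_le_trans (card_le_supportX io_inj PG natG fG Gmax)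
  (card_supportX_le PG fG).
apply: card_le_trans (card_le_setX AB AB) _.
exact: card_le_trans (card_supportX_le PG fG) (subset_card_le GA).
Qed.

Lemma card_seq_le {T : eqType} {U : pointedType} (X : set T) (A : set U) :
  infinite_set A -> X #<= A -> [set s : seq T | {in s, forall x, X x}] #<= A.
Proof.
move=> Ainf /card_lePex[phi phiA phi_inj].
have /card_lePex[io ioA io_inj] := (infiniteP A).1 Ainf.
have /card_lePex[pair pairA pair_inj] := card_setX_le Ainf.
(* The length is encoded as well, since the empty list and a cons cell may
   get the same code. *)
pose code := foldr (fun x acc => pair (phi x, acc)) (io 0%N).
have codeA s : {in s, forall x, X x} -> A (code s).
  elim: s => [_|x s IH /in_consP[Xx sX]]; first exact: ioA.
  by apply: pairA; split; [apply: phiA | apply: IH].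
have code_inj s s' : {in s, forall x, X x} -> {in s', forall x, X x} ->
    size s = size s' -> code s = code s' -> s = s'.
  elim: s s' => [|x s IH] [|x' s'] //= /in_consP[Xx sX] /in_consP[Xx' sX'] [sz].
  have AAx : (A `*` A) (phi x, code s) by split; [apply: phiA | apply: codeA].
  have AAx' : (A `*` A) (phi x', code s') by split; [apply: phiA | apply: codeA].
  by move=> /(pair_inj _ _ AAx AAx')[/phi_inj-> // /IH->].
apply/card_lePex; exists (fun s => pair (io (size s), code s)).
  by move=> s sX; apply: pairA; split; [apply: ioA | apply: codeA].
move=> s s' sX s'X.
have AAs : (A `*` A) (io (size s), code s) by split; [apply: ioA | apply: codeA].
have AAs' : (A `*` A) (io (size s'), code s') by split; [apply: ioA | apply: codeA].
by move=> /(pair_inj _ _ AAs AAs')[/(io_inj _ _ I I)]; apply: code_inj.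
Qed.

(** * Linear spans and Riesz's lemma *)

Section LinearSpan.
Variables (R : pzRingType) (E : lmodType R).
Implicit Types (S Y : set E) (x y z v : E).

Definition lin_comb (l : seq (R * E)) : E := \sum_(p <- l) p.1 *: p.2.

Lemma lin_comb_nil : lin_comb [::] = 0.
Proof. exact: big_nil. Qed.

Lemma lin_comb_cons p l : lin_comb (p :: l) = p.1 *: p.2 + lin_comb l.
Proof. exact: big_cons. Qed.

Definition lin_span S : set E :=
  [set lin_comb l | l in [set l : seq (R * E) | {in l, forall p, S p.2}]].

Definition lin_subspace Y :=
  [/\ Y 0, forall u v, Y u -> Y v -> Y (u + v) & forall a v, Y v -> Y (a *: v)].

Lemma lin_subspace_span S : lin_subspace (lin_span S).
Proof.
split.
- by exists [::]; rewrite // lin_comb_nil.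
- move=> _ _ [l1 Sl1 <-] [l2 Sl2 <-]; exists (l1 ++ l2); last exact: big_cat.
  by move=> p; rewrite mem_cat => /orP[/Sl1|/Sl2].
- move=> a _ [l Sl <-]; exists [seq (a * p.1, p.2) | p <- l].
    by move=> q /mapP[p /Sl Sp ->].
  by rewrite /lin_comb big_map scaler_sumr; apply: eq_bigr => p _; rewrite scalerA.
Qed.

Lemma sub_lin_span S : S `<=` lin_span S.
Proof.
move=> x Sx; exists [:: (1, x)]; last by rewrite /lin_comb big_seq1 scale1r.
by move=> p; rewrite mem_seq1 => /eqP->.
Qed.

Lemma lin_span_sum S (s : seq E) (P : pred E) (c : E -> R) :
  {in s, forall y, P y -> S y} -> lin_span S (\sum_(y <- s | P y) c y *: y).
Proof.
move=> sS; exists [seq (c y, y) | y <- s & P y].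
  by move=> q /mapP[y]; rewrite mem_filter => /andP[Py /sS/(_ Py) Sy ->].
by rewrite /lin_comb big_map big_filter.
Qed.

Lemma lin_span_cons x (s : seq E) v : lin_span [set` x :: s] v <->
  exists a y, lin_span [set` s] y /\ v = y + a *: x.
Proof.
have [_ spanD spanZ] := lin_subspace_span [set` x :: s].
split=> [[l]|[a [_ [[l sl <-] ->]]]]; last first.
  apply: spanD; last by apply/spanZ/sub_lin_span/mem_head.
  by exists l => // p /sl ps; rewrite /= in_cons ps orbT.
elim: l v => [|p l IH] v pl <-.
  exists 0, 0; rewrite lin_comb_nil scale0r addr0; split=> //.
  by exists [::]; rewrite // lin_comb_nil.
move: pl => /in_consP[/= pxs pl].
have [a [_ [[l' sl' <-] e]]] := IH _ pl erefl.
have -> : lin_comb (p :: l) = p.1 *: p.2 + (lin_comb l' + a *: x).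
  by rewrite -e lin_comb_cons.
move: pxs; rewrite in_cons => /predU1P[->|ps].
  exists (p.1 + a), (lin_comb l'); split; first by exists l'.
  by rewrite scalerDl addrCA.
exists a, (lin_comb (p :: l')); split; last by rewrite lin_comb_cons addrA.
by exists (p :: l') => //; apply/in_consP.
Qed.

Lemma lin_span_nil v : lin_span [set` [::] : seq E] v -> v = 0.
Proof.
case=> -[|p l] pl <-; first by rewrite lin_comb_nil.
by have := pl p (mem_head _ _).
Qed.

Lemma lin_span_uniq_coef (s : seq E) v : uniq s -> lin_span [set` s] v ->
  exists c : E -> R, v = \sum_(y <- s) c y *: y.
Proof.
move=> us [l sl <-]; elim: l sl => [_|p l IH /in_consP[ps sl]].
  by exists (fun _ => 0); rewrite lin_comb_nil big1 // => y _; rewrite scale0r.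
have [c e] := IH sl.
exists (fun y => c y + (if y == p.2 then p.1 else 0)).
under eq_bigr => y _ do rewrite scalerDl.
rewrite lin_comb_cons e big_split /= addrC; congr (_ + _).
rewrite (bigD1_seq p.2) ?eqxx //=.
by rewrite big1 ?addr0 // => y /negbTE->; rewrite scale0r.
Qed.

End LinearSpan.

Lemma continuous_of_lipschitz (R : realFieldType) (f : R -> R) (k : R) :
  (forall a b, f a <= f b + k * `|a - b|) -> continuous f.
Proof.
move=> f_lip a; apply/cvgrPdist_lt => e e0.
have k1 : 0 < `|k| + 1 by rewrite ltr_wpDl.
apply/nbhs_ballP; exists (e / (`|k| + 1)) => /= [|t]; first by rewrite divr_gt0.
rewrite /ball_ /= ltr_pdivlMr // => ate.
have f_lip' b c : `|b - c| = `|a - t| -> f b <= f c + `|k| * `|a - t|.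
  move=> bc; apply: le_trans (f_lip b c) _.
  by rewrite lerD2l bc ler_wpM2r // real_ler_norm // num_real.
have := f_lip' a t erefl; have := f_lip' t a (distrC t a).
have : `|k| * `|a - t| < e.
  by apply: le_lt_trans ate; rewrite mulrC ler_wpM2l // lerDl.
set M := `|k| * `|a - t| => Me h1 h2.
by rewrite ltr_norml; apply/andP; split; lra.
Qed.

Section Distance.
Variables (R : realType) (E : normedModType R).
Implicit Types (Y : set E) (x y z : E).

Definition set_dist Y z := inf [set `|z - y| | y in Y].

Definition apart Y z := exists2 r : R, 0 < r & forall y, Y y -> r <= `|z - y|.

Lemma set_dist_le Y z y : Y y -> set_dist Y z <= `|z - y|.
Proof. by move=> Yy; apply: ge_inf; [exists 0 => _ [? _ <-] | exists y]. Qed.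

Lemma set_dist_ge Y z r : Y !=set0 -> (forall y, Y y -> r <= `|z - y|) ->
  r <= set_dist Y z.
Proof.
move=> [y Yy] rY; apply: lb_le_inf; first by exists `|z - y|, y.
by move=> _ [y' /rY ? <-].
Qed.

Lemma set_dist_approx Y z e : Y !=set0 -> 0 < e ->
  exists2 y, Y y & `|z - y| < set_dist Y z + e.
Proof.
move=> [y Yy] e0.
have [|_ [y' Yy' <-]] := @inf_adherent _ [set `|z - y| | y in Y] e e0.
  by split; [exists `|z - y|, y | exists 0 => _ [? _ <-]].
by exists y'.
Qed.

Lemma set_dist_lipschitz Y u v : Y !=set0 ->
  set_dist Y u <= set_dist Y v + `|u - v|.
Proof.
move=> Yn0; rewrite -lerBlDr; apply: set_dist_ge => // y Yy.
rewrite lerBlDr; apply: le_trans (set_dist_le u Yy) _.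
by rewrite [leRHS]addrC ler_distD.
Qed.

Lemma apart_set_dist Y z : Y !=set0 -> apart Y z -> 0 < set_dist Y z.
Proof. by move=> Yn0 [r r0 rY]; apply: lt_le_trans r0 (set_dist_ge Yn0 rY). Qed.

Lemma apart_of_not_dense Y : ~ dense Y -> exists z, apart Y z.
Proof.
move=> /denseNE[W [[z [oW Wz]] WY]].
have /nbhs_ballP[r /= r0 rW] : nbhs z W by apply: open_nbhs_nbhs.
exists z, r => // y Yy; rewrite leNgt; apply/negP => zy.
suff : (W `&` Y) y by rewrite WY.
by split=> //; apply: rW; rewrite -ball_normE.
Qed.

Lemma riesz_lemma Y z : lin_subspace Y -> apart Y z ->
  exists x, `|x| = 1 /\ forall y, Y y -> 2^-1 <= `|x - y|.
Proof.
move=> [Y0 YD YZ] zY; have Yn0 : Y !=set0 by exists 0.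
have d0 := apart_set_dist Yn0 zY; set d := set_dist Y z in d0 *.
have [y0 Yy0] := set_dist_approx z Yn0 d0; set n := `|z - y0| => nd.
have n0 : 0 < n := lt_le_trans d0 (set_dist_le z Yy0).
exists (n^-1 *: (z - y0)); split.
  by rewrite normrZ gtr0_norm ?invr_gt0 // mulVf // gt_eqF.
move=> y Yy.
have -> : n^-1 *: (z - y0) - y = n^-1 *: (z - (y0 + n *: y)).
  by rewrite !scalerBr scalerDr scalerA mulVf ?gt_eqF // scale1r opprD addrA.
rewrite normrZ gtr0_norm ?invr_gt0 //.
apply: (@le_trans _ _ (n^-1 * d)); last first.
  by rewrite ler_pM2l ?invr_gt0 //; apply/set_dist_le/YD/YZ.
by rewrite -(ler_pM2l n0) mulrA mulfV ?gt_eqF // mul1r; lra.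
Qed.

End Distance.

Section FiniteSpan.
Variables (R : realType) (E : normedModType R).
Implicit Types (Y : set E) (x y z : E).

Lemma far_along_line Y x z d a y : lin_subspace Y ->
  (forall y, Y y -> d <= `|x - y|) -> Y y ->
  `|a| * d - `|z| <= `|z - (y + a *: x)|.
Proof.
move=> [_ _ YZ] xY Yy; rewrite distrC (le_trans _ (lerB_dist _ _)) // lerD2r.
have [->|a0] := eqVneq a 0; first by rewrite normr0 mul0r.
have -> : y + a *: x = a *: (x - (- a^-1) *: y).
  by rewrite scaleNr opprK scalerDr scalerA mulfV // scale1r addrC.
by rewrite normrZ ler_wpM2l //; apply/xY/YZ.
Qed.

Lemma apart_span_cons x (s : seq E) z :
  (forall w, ~ lin_span [set` s] w -> apart (lin_span [set` s]) w) ->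
  ~ lin_span [set` x :: s] z -> apart (lin_span [set` x :: s]) z.
Proof.
set Y := lin_span [set` s] => IH nz.
have Ysub := lin_subspace_span [set` s]; have [Y0 YD YZ] := Ysub.
have Yn0 : Y !=set0 by exists 0.
have [Yx|nYx] := pselect (Y x).
  have [r r0 zr] : apart Y z.
    apply: IH => Yz; apply: nz; apply/lin_span_cons.
    by exists 0, z; rewrite scale0r addr0.
  by exists r => // _ /lin_span_cons[a [y [Yy ->]]]; apply/zr/YD/YZ.
have [d d0 xd] := IH x nYx.
pose h a := set_dist Y (z - a *: x).
have h_gt0 a : 0 < h a.
  apply/apart_set_dist/IH => // Yza; apply: nz; apply/lin_span_cons.
  by exists a, (z - a *: x); rewrite subrK.
have h_cont : continuous h.
  apply: (@continuous_of_lipschitz _ _ `|x|) => a b.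
  apply: le_trans (set_dist_lipschitz (z - a *: x) (z - b *: x) Yn0) _.
  rewrite lerD2l (_ : _ - _ = (b - a) *: x) ?normrZ 1?distrC 1?mulrC //.
  by rewrite scalerBl opprB addrC addrA subrK.
(* Beyond M the distance is at least 1 by far_along_line; on [-M, M] it is
   bounded below by compactness. *)
pose M := (`|z| + 1) / d.
have [|c _ hc] := @EVT_min _ h (- M) M _ (continuous_subspaceT h_cont).
  have : 0 <= M by rewrite divr_ge0 ?addr_ge0 // ltW.
  lra.
exists (Num.min 1 (h c)); first by rewrite lt_min ltr01 h_gt0.
move=> _ /lin_span_cons[a [y [Yy ->]]]; rewrite ge_min.
have [aM|Ma] := lerP `|a| M.
  apply/orP; right; apply: le_trans (hc a _) _.
    by rewrite in_itv /= -ler_norml.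
  by rewrite /h opprD addrA addrAC; apply: set_dist_le.
apply/orP; left; apply: le_trans _ (far_along_line z a Ysub xd Yy).
by rewrite lerBrDl -(divfK (lt0r_neq0 d0) (_ + 1)) ltW // ltr_pM2r.
Qed.

Lemma apart_span_seq (s : seq E) z :
  ~ lin_span [set` s] z -> apart (lin_span [set` s]) z.
Proof.
elim: s z => [|x s IH] z nz; last exact: apart_span_cons.
exists `|z| => [|_ /lin_span_nil ->]; last by rewrite subr0.
have [span0 _ _] := lin_subspace_span [set` [::] : seq E].
by rewrite normr_gt0; apply/eqP => z0; apply: nz; rewrite z0.
Qed.

Lemma finite_dim_span_seq (s : seq E) : (forall z, lin_span [set` s] z) ->
  finite_dim E.
Proof.
move=> sE; exists (undup s) => z; apply: lin_span_uniq_coef (undup_uniq s) _.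
have -> : [set` undup s] = [set` s].
  by apply/seteqP; split=> y /=; rewrite mem_undup.
exact: sE.
Qed.

End FiniteSpan.

(** * Maximal admissible families *)

Section Admissible.
Variables (R : realType) (E : normedModType R).
Implicit Types (S : set E) (x y z : E).

Definition line_separated (delta : R) S :=
  forall x x', S x -> S x' -> x <> x' -> forall l : R, delta <= `|x - l *: x'|.

Definition admissible S :=
  [/\ S `<=` unit_sphere, lin_indep S & line_separated 3^-1 S].

Lemma lin_indep_setU1 S x : lin_indep S -> ~ lin_span S x ->
  lin_indep (S `|` [set x]).
Proof.
move=> Sind nSx s us sSx c sc.
have sS : {in s, forall y, y != x -> S y} by move=> y /sSx[//|->]; rewrite eqxx.
have [xs|xNs] := boolP (x \in s); last first.
  apply: (Sind s us) sc => y ys; apply: (sS _ ys).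
  by apply/eqP => yx; move: xNs; rewrite -yx ys.
move: sc; rewrite (bigD1_seq x) //= => sc.
have cx0 : c x = 0.
  apply: contra_notP nSx => /eqP cx.
  have -> : x = - (c x)^-1 *: \sum_(y <- s | y != x) c y *: y.
    apply: (scalerI cx); rewrite scalerA mulrN mulfV // scaleN1r.
    by apply/eqP; rewrite -subr_eq0 opprK sc.
  by have [_ _ spanZ] := lin_subspace_span S; apply/spanZ/lin_span_sum.
move: sc; rewrite cx0 scale0r add0r -big_filter => sc y ys.
have [->|yx] := eqVneq y x; first exact: cx0.
have := Sind _ (filter_uniq _ us) _ c sc; apply; last by rewrite mem_filter yx.
by move=> z; rewrite mem_filter => /andP[zx zs]; apply: sS.
Qed.

Lemma line_separated_setU1 S x : S `<=` unit_sphere -> line_separated 3^-1 S ->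
  `|x| = 1 -> (forall y, lin_span S y -> 2^-1 <= `|x - y|) ->
  line_separated 3^-1 (S `|` [set x]).
Proof.
move=> S1 Ssep x1 xfar; have [_ _ spanZ] := lin_subspace_span S.
have far_line x' l : S x' -> 2^-1 <= `|x - l *: x'|.
  by move=> /sub_lin_span/(spanZ l)/xfar.
move=> x1' x2' [Sx1|->] [Sx2|->] // neq l; first exact: Ssep.
  have h1 : 1 - `|l| <= `|x1' - l *: x|.
    by have := lerB_dist x1' (l *: x); rewrite normrZ x1 mulr1 (S1 _ Sx1).
  have h2 : `|l| * 2^-1 <= `|x1' - l *: x|.
    have [->|l0] := eqVneq l 0; first by rewrite normr0 mul0r.
    have -> : x1' - l *: x = - l *: (x - l^-1 *: x1').
      by rewrite scalerBr scalerA mulNr mulfV // scaleN1r opprK scaleNr addrC.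
    by rewrite normrZ normrN ler_wpM2l // far_line.
  lra.
by apply: le_trans (far_line _ l Sx2); lra.
Qed.

Lemma admissible_setU1 S x : admissible S -> `|x| = 1 ->
  (forall y, lin_span S y -> 2^-1 <= `|x - y|) ->
  ~ S x /\ admissible (S `|` [set x]).
Proof.
move=> [S1 Sind Ssep] x1 xfar.
have nSx : ~ lin_span S x by move=> /xfar; rewrite subrr normr0; lra.
split; first by move=> /sub_lin_span.
split; [by move=> y [/S1|->] | exact: lin_indep_setU1 |].
exact: line_separated_setU1.
Qed.

Lemma admissible_bigcup F : F `<=` admissible -> F !=set0 -> total_on F subset ->
  admissible (\bigcup_(X in F) X).
Proof.
move=> FA Fn0 Ftot; split.
- by move=> x [X /FA[X1 _ _] Xx]; apply: X1.
- move=> s us sF; have [X /FA[_ Xind _] Xs] := chain_bigcup_seq Ftot Fn0 sF.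
  exact: Xind us Xs.
- move=> x x' Fx Fx'; have [X /FA[_ _ Xsep] [Xx Xx']] := chain_bigcup2 Ftot Fx Fx'.
  exact: Xsep.
Qed.

Lemma exists_maximal_admissible :
  exists S, admissible S /\ forall S', S `<` S' -> ~ admissible S'.
Proof.
have [|S _ SA] := @Zorn_bigcup_from _ admissible set0 _ admissible_bigcup.
  by split=> [x []|s _ s0 c _ x /s0 []|x x' []].
by exists S.
Qed.

Section MaximalAdmissible.
Variable S : set E.
Hypotheses (SA : admissible S) (Smax : forall S', S `<` S' -> ~ admissible S').

Lemma maximal_admissible_not_apart z : ~ apart (lin_span S) z.
Proof.
move=> /(riesz_lemma (lin_subspace_span S))[x [x1 xfar]].
have [nSx SxA] := admissible_setU1 SA x1 xfar.
apply: Smax SxA; split; first exact: subsetUl.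
by move=> /(_ x (or_intror erefl)).
Qed.

Lemma maximal_admissible_dense : dense (lin_span S).
Proof.
by apply: contrapT => /apart_of_not_dense[z]; apply: maximal_admissible_not_apart.
Qed.

Lemma maximal_admissible_infinite : infinite_dim E -> infinite_set S.
Proof.
move=> Einf /finite_seqP[s Ss]; apply: Einf; apply: finite_dim_span_seq => z.
apply: contrapT => /(apart_span_seq (s := s)).
by have := @maximal_admissible_not_apart z; rewrite Ss.
Qed.

End MaximalAdmissible.
End Admissible.

(** * Density character *)

Section DensityCharacter.
Variables (R : realType) (E : normedModType R).
Implicit Types (S D : set E).

Lemma card_le_dense_of_separated S D (e : R) : 0 < e ->
  (forall x x', S x -> S x' -> x <> x' -> e <= `|x - x'|) -> dense D -> S #<= D.
Proof.
move=> e0 Ssep Ddense.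
have e20 : 0 < e / 2 by rewrite divr_gt0.
have near_D x : S x -> exists d, D d /\ `|x - d| < e / 2.
  move=> _; have [|d [xd Dd]] := Ddense (ball x (e / 2)) _ (ball_open x _).
    by exists x; apply: ballxx.
  by exists d; split=> //; move: xd; rewrite -ball_normE.
have [f fD] := set_choice (0 : E) near_D.
apply/card_lePex; exists f; first by move=> x /fD[].
move=> x x' Sx Sx' fxx'; apply: contrapT => neq.
have [_ h1] := fD _ Sx; have [_] := fD _ Sx'; rewrite -fxx' distrC => h2.
have := Ssep _ _ Sx Sx' neq; have := ler_distD (f x) x x'.
move: h1 h2; set a := `|x - f x|; set b := `|f x - x'|; set c := `|x - x'|.
move=> *; lra.
Qed.

Definition rat_span S : set E :=
  [set lin_comb [seq (ratr p.1, p.2) | p <- l]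
    | l in [set l : seq (rat * E) | {in l, forall p, S p.2}]].

Lemma rat_span_approx S v (e : R) : lin_span S v -> 0 < e ->
  exists2 w, rat_span S w & `|v - w| < e.
Proof.
move=> [l + <-]; elim: l e => [|[a x] l IH] e; first move=> _ e0.
  exists 0; last by rewrite lin_comb_nil subrr normr0.
  by exists [::]; rewrite // lin_comb_nil.
move=> /in_consP[/= Sx Sl] e0.
have e20 : 0 < e / 2 by rewrite divr_gt0.
have [_ [l' Sl' <-] ll'] := IH _ Sl e20.
have x1 : 0 < `|x| + 1 by rewrite ltr_wpDl.
have ex0 : 0 < e / 2 / (`|x| + 1) by rewrite divr_gt0.
set r := e / 2 / (`|x| + 1) in ex0 *.
have [q] := @rat_in_itvoo R (a - r) (a + r) ltac:(lra).
rewrite in_itv /= => /andP[aq qa].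
exists (lin_comb [seq (ratr p.1, p.2) | p <- (q, x) :: l']).
  by exists ((q, x) :: l') => //; apply/in_consP.
rewrite /= !lin_comb_cons /= opprD addrACA -scalerBl.
apply: le_lt_trans (ler_normD _ _) _; rewrite normrZ.
have : `|a - ratr q| * `|x| < e / 2.
  apply: (@le_lt_trans _ _ (r * `|x|)).
    by rewrite ler_wpM2r // ler_norml; apply/andP; split; lra.
  by rewrite mulrAC ltr_pdivrMr // ltr_pM2l // ltrDl.
move: ll'; set u := `|a - ratr q| * _; set w := `|_ - _|; lra.
Qed.

Lemma rat_span_dense S : dense (lin_span S) -> dense (rat_span S).
Proof.
move=> Sdense W Wn0 oW; have [v [Wv Sv]] := Sdense W Wn0 oW.
have /nbhs_ballP[r /= r0 rW] : nbhs v W by apply: open_nbhs_nbhs.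
have [w Sw vw] := rat_span_approx Sv r0.
by exists w; split=> //; apply: rW; rewrite -ball_normE.
Qed.

Lemma card_rat_span_le S : infinite_set S -> rat_span S #<= S.
Proof.
move=> Sinf; apply: card_le_trans (card_image_le _ _) _.
apply: card_seq_le => //.
apply: (@card_le_trans _ _ _ ([set: rat] `*` S)).
  by apply: subset_card_le => p Sp.
apply: card_le_trans (card_setX_le Sinf); apply: card_le_setX (card_lexx S).
exact: card_le_trans ((card_eqPle _ _).1 card_rat).1 ((infiniteP S).1 Sinf).
Qed.

End DensityCharacter.

Theorem lemma3p1 (R : realType) (E : completeNormedModType R) (D : set E) :
  infinite_dim E -> density_character_set D ->
  exists delta : R, 0 < delta /\
    exists S : set E,
      S `<=` unit_sphere /\ lin_indep S /\ (S #= D)%card /\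
      forall x x', S x -> S x' -> x <> x' ->
        forall lambda : R, delta <= `|x - lambda *: x'|.
Proof.
move=> Einf [Ddense Dmin].
have [S [SA Smax]] := exists_maximal_admissible E.
have [S1 Sind Ssep] := SA.
exists 3^-1; split; first by rewrite invr_gt0.
exists S; do 2!split=> //; split=> //.
apply/card_eqPle; split.
  apply: card_le_dense_of_separated (_ : 0 < 3^-1) _ Ddense => // x x' Sx Sx' neq.
  by have := Ssep _ _ Sx Sx' neq 1; rewrite scale1r.
apply: card_le_trans (Dmin _ (rat_span_dense (maximal_admissible_dense SA Smax))) _.
exact: card_rat_span_le (maximal_admissible_infinite SA Smax Einf).
Qed.
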